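(* Let $(G,\mathbf p)$ be a framework (with $\mathbf p$ pinned with $\ell$-dimensional affine span) and $E$ an energy that is stiff-bar at $\mathbf p$. An $\ell$-pinned configuration $\mathbf p'$ lies in the kernel of the Hessian $H_E(\mathbf p)$ of $E$ at $\mathbf p$ (as a function on $\ell$-pinned configuration space) if and only if $\mathbf p(t)=\mathbf p+\mathbf p't$ is a $(1,1)$-flex of $(G,\mathbf p)$ (or $\mathbf p'=0$), i.e. if and only if $\mathbf p'\in K$.
   Context: Fix a dimension $d$. A configuration is $\mathbf p=(\mathbf p_1,\dots,\mathbf p_n)$, $\mathbf p_i\in\mathbb R^d$; a framework $(G,\mathbf p)$ consists of a graph $G$ on $\{1,\dots,n\}$ and a configuration. A configuration $\mathbf q$ is in $\ell$-pinned position if $\mathbf q_1=0$ and, for $2\le i\le\ell+1$, $\mathbf q_i\in\mathrm{span}(e_1,\dots,e_{i-1})$; these form the $\ell$-pinned configuration space. $\mathbf p$ is pinned if it has $\ell$-dimensional affine span, $\mathbf p_1,\dots,\mathbf p_{\ell+1}$ are affinely independent, and $\mathbf p$ is in $\ell$-pinned position. A $(1,1)$-flex of $(G,\mathbf p)$ is an analytic non-constant $\ell$-pinned trajectory $\mathbf p(t)$, $\mathbf p(0)=\mathbf p$, with nonzero first derivative at $0$ and such that $\frac{d}{dt}|\mathbf p_i(t)-\mathbf p_j(t)|^2\big|_{t=0}=0$ for every edge $ij$. $K$ is the linear space of $\ell$-pinned $\mathbf p'$ with $(\mathbf p_v-\mathbf p_w)\cdot(\mathbf p'_v-\mathbf p'_w)=0$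 for all edges $vw$. A stiff-bar energy at $\mathbf p$ is $E(\mathbf q)=\sum_{ij\in E(G)}E_{ij}(|\mathbf q_i-\mathbf q_j|)$ on $\ell$-pinned configurations, where each $E_{ij}:\mathbb R\to\mathbb R$ is analytic at $d_{ij}=|\mathbf p_i-\mathbf p_j|\ne0$, has a strict local minimum at $d_{ij}$, and $E_{ij}''(d_{ij})>0$. *)

From HB Require Import structures.
From mathcomp Require Import all_boot all_order all_algebra.
From mathcomp Require Import all_classical all_reals all_analysis.
Set Implicit Arguments. Unset Strict Implicit. Unset Printing Implicit Defensive.
Import Order.TTheory GRing.Theory Num.Theory.
Import numFieldNormedType.Exports.
Local Open Scope ring_scope.
Local Open Scope classical_set_scope.

Section Defs.
Variables (R : realType) (n d : nat).

(* A configuration of n points in R^d: row i (0-based) is the point p_(i+1). *)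
Definition config := 'M[R]_(n, d).

Definition simple_graph (G : rel 'I_n) : Prop :=
  (forall i j, G i j = G j i) /\ (forall i, ~~ G i i).

Definition dotv (q r : config) (i j : 'I_n) : R :=
  \sum_(k < d) (q i k - q j k) * (r i k - r j k).

Definition sqdist (q : config) (i j : 'I_n) : R := dotv q q i j.

Definition dist (q : config) (i j : 'I_n) : R := Num.sqrt (sqdist q i j).

(* l-pinned position (0-based: point 0 is the origin, point i for 1 <= i <= l
   lies in span(e_0, ..., e_(i-1)), i.e. its coordinates k >= i vanish). *)
Definition pinned_pos (l : nat) (q : config) : Prop :=
  forall (i : 'I_n) (k : 'I_d), (i <= l)%N -> (i <= k)%N -> q i k = 0.

Definition affine_dim (q : config) : nat :=
  \rank (\sum_(i < n) \sum_(j < n) <<row i q - row j q>>)%MS.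

Definition first_affinely_independent (l : nat) (q : config) : Prop :=
  (l < n)%N /\
  forall c : 'I_n -> R,
    (forall i : 'I_n, (l < i)%N -> c i = 0) ->
    \sum_(i < n) c i = 0 ->
    \sum_(i < n) c i *: row i q = 0 ->
    forall i, c i = 0.

Definition pinned (l : nat) (p : config) : Prop :=
  [/\ affine_dim p = l, first_affinely_independent l p & pinned_pos l p].

Definition analytic_at (f : R -> R) (x0 : R) : Prop :=
  exists (a : nat -> R) (r : R), 0 < r /\
    forall x, `|x - x0| < r ->
      (fun N : nat => \sum_(k < N) a k * (x - x0) ^+ k) @ \oo --> f x.

Definition stiff_bar (G : rel 'I_n) (p : config) (Eij : 'I_n -> 'I_n -> R -> R)
  : Prop :=
  forall i j, G i j ->
    [/\ dist p i j != 0,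
        analytic_at (Eij i j) (dist p i j),
        (\forall x \near dist p i j, x != dist p i j ->
            Eij i j (dist p i j) < Eij i j x)
      & 0 < derive1n 2 (Eij i j) (dist p i j)].

Definition energy (G : rel 'I_n) (Eij : 'I_n -> 'I_n -> R -> R) (q : config) : R :=
  \sum_(i < n) \sum_(j < n | (i < j)%N && G i j) Eij i j (dist q i j).

Definition hessian (F : config -> R) (p u v : config) : R :=
  derive1 (fun s : R => derive1 (fun t : R => F (p + s *: u + t *: v)) 0) 0.

Definition hess_kernel (l : nat) (F : config -> R) (p u : config) : Prop :=
  pinned_pos l u /\ forall v, pinned_pos l v -> hessian F p u v = 0.

Definition is_11_flex (l : nat) (G : rel 'I_n) (p : config) (traj : R -> config)
  : Prop :=
  (forall i k, analytic_at (fun t => traj t i k) 0) /\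
  [/\ (forall t, pinned_pos l (traj t)),
      traj 0 = p,
      (exists t, traj t != traj 0),
      (exists i k, derive1 (fun t => traj t i k) 0 != 0)
    & (forall i j, G i j -> derive1 (fun t => sqdist (traj t) i j) 0 = 0)].

Definition Kspace (l : nat) (G : rel 'I_n) (p : config) (p' : config) : Prop :=
  pinned_pos l p' /\ forall v w, G v w -> dotv p p' v w = 0.

End Defs.

From HB Require Import structures.
From mathcomp Require Import all_boot all_order all_algebra.
From mathcomp Require Import all_classical all_reals all_analysis.
From mathcomp Require Import ring lra.
Import Order.TTheory GRing.Theory Num.Theory.
Import numFieldNormedType.Exports.
Local Open Scope ring_scope.
Local Open Scope classical_set_scope.
Set Implicit Arguments. Unset Strict Implicit. Unset Printing Implicit Defensive.

(* Since E_ij has a strict local minimum at d_ij and is analytic (hence C^2) there,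
   E_ij'(d_ij) = 0.  Differentiating E_ij(|q_i - q_j|) twice along p + s u + t v,
   the terms carrying E_ij'(d_ij) drop out and the Hessian is the form
     H(u, v) = sum_(edges ij) E_ij''(d_ij) / d_ij^2
                 * ((p_i - p_j).(u_i - u_j)) * ((p_i - p_j).(v_i - v_j))
   with positive weights.  So H(p', p') = 0 forces (p_i - p_j).(p'_i - p'_j) = 0 on
   every edge, i.e. p' in K, and conversely p' in K kills H(p', _).  Finally
   d/dt |p_i - p_j + t (p'_i - p'_j)|^2 at 0 is 2 (p_i - p_j).(p'_i - p'_j), so for
   p' <> 0 the line p + t p' is a (1,1)-flex exactly when p' is in K. *)

Section PowerSeries.
Variable R : realType.
Implicit Types (c : R^nat) (f : R -> R).

Lemma sum_natS_expr q N :
  (1 - q) ^+ 2 * \sum_(0 <= i < N) i.+1%:R * q ^+ i =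
  1 - N.+1%:R * q ^+ N + N%:R * q ^+ N.+1 :> R.
Proof.
elim: N => [|N IH]; first by rewrite big_nil mulr0 expr0 mulr1 mul0r addr0 subrr.
by rewrite big_nat_recr //= mulrDr IH !exprS -!(natr1 N) -!(natr1 N.+1); ring.
Qed.

Lemma is_cvg_series_natS_expr (q : R) :
  0 <= q < 1 -> cvgn (series (fun i => i.+1%:R * q ^+ i)).
Proof.
move=> /andP[q0 q1]; apply: nondecreasing_is_cvgn.
  by apply: nondecreasing_series => i _ /=; rewrite mulr_ge0 ?exprn_ge0.
exists ((1 - q) ^+ 2)^-1 => _ [N _ <-] /=.
have q1_gt0 : 0 < (1 - q) ^+ 2 by rewrite exprn_gt0 // subr_gt0.
rewrite -(ler_pM2l q1_gt0) mulfV ?gt_eqF // /series /= sum_natS_expr.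
have qN_ge0 : 0 <= q ^+ N by rewrite exprn_ge0.
have : 0 <= N%:R * q ^+ N * (1 - q) by rewrite !mulr_ge0 // subr_ge0 ltW.
by rewrite exprS -natr1; nra.
Qed.

(* Compare with [(M + 1) / w * (i + 1) (|z| / w)^i], where [M] bounds the terms
   of the series at [K] and [|z| < w < |K|]. *)
Lemma is_cvg_pseries_diffs_inside c (K z : R) :
  cvgn (pseries c K) -> `|z| < `|K| -> cvgn (pseries (pseries_diffs c) z).
Proof.
move=> cK zK.
have [M [_ M_bound]] := cvg_series_bounded cK.
have cKM i : `|c i * K ^+ i| <= M + 1 by apply: M_bound => //; rewrite ltrDl.
have M1_ge0 : 0 <= M + 1 by apply: le_trans (cKM 0%N).
have [+ +] := midf_lt zK; move: (_ / 2) => w zw wK.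
have w_gt0 : 0 < w by apply: le_lt_trans zw.
pose q := `|z| / w.
have q_ge0 : 0 <= q by rewrite /q divr_ge0 // ltW.
have q_lt1 : q < 1 by rewrite /q ltr_pdivrMr // mul1r.
apply: normed_cvg.
apply: (@series_le_cvg _ _ (((M + 1) / w) *: (fun i => i.+1%:R * q ^+ i))).
- by move=> i; rewrite normr_ge0.
- move=> i; change (0 <= (M + 1) / w * (i.+1%:R * q ^+ i)).
  by rewrite !mulr_ge0 ?exprn_ge0 ?invr_ge0 // ltW.
- move=> i; change (`|pseries_diffs c i * z ^+ i| <= (M + 1) / w * (i.+1%:R * q ^+ i)).
  rewrite /pseries_diffs !normrM normr_nat normrX.
  have cw : `|c i.+1| * w ^+ i.+1 <= M + 1.
    apply: le_trans (cKM i.+1); rewrite normrM normrX ler_wpM2l //.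
    by rewrite lerXn2r // ?nnegrE ltW // (lt_trans w_gt0).
  have -> : (M + 1) / w * (i.+1%:R * q ^+ i) =
            i.+1%:R * `|z| ^+ i * ((M + 1) / w ^+ i.+1).
    by rewrite /q exprMn exprVn exprS invfM; ring.
  by rewrite mulrAC ler_wpM2l ?mulr_ge0 ?exprn_ge0 // ler_pdivlMr ?exprn_gt0.
- exact/is_cvg_seriesZ/is_cvg_series_natS_expr/andP.
Qed.

(* [pseries_snd_diffs] wants [c], its derivative and its second derivative
   to converge at one radius; take one strictly between [|x|] and [|K|]. *)
Lemma is_derive_pseries c (K x : R) : cvgn (pseries c K) -> `|x| < `|K| ->
  is_derive x 1 (fun z => limn (pseries c z)) (limn (pseries (pseries_diffs c) x)).
Proof.
move=> cK xK.
have [+ +] := midf_lt xK; move: (_ / 2) => K1 xK1 K1K.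
have [+ +] := midf_lt K1K; move: (_ / 2) => K2 K1K2 K2K.
have K1_ge0 : 0 <= K1 := le_trans (normr_ge0 x) (ltW xK1).
have [nK1 nK2] : `|K1| = K1 /\ `|K2| = K2.
  by rewrite !ger0_norm // (le_trans K1_ge0) // ltW.
have dcK2 : cvgn (pseries (pseries_diffs c) K2).
  by apply: is_cvg_pseries_diffs_inside cK _; rewrite nK2.
apply: (pseries_snd_diffs (K := K1)); rewrite ?nK1 //.
- by apply: is_cvg_pseries_inside cK _; rewrite nK1.
- by apply: is_cvg_pseries_inside dcK2 _; rewrite nK1 nK2.
- by apply: is_cvg_pseries_diffs_inside dcK2 _; rewrite nK1 nK2.
Qed.

Lemma analytic_at_derivable2 f x0 : analytic_at f x0 ->
  (\forall x \near x0, derivable f x 1) /\ derivable (derive1 f) x0 1.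
Proof.
case=> a [r [r_gt0 Ha]].
pose F z := limn (pseries a z); pose F1 z := limn (pseries (pseries_diffs a) z).
have pseriesE z : pseries a z = fun N => \sum_(k < N) a k * z ^+ k.
  by apply/funext => N; rewrite /pseries /series /= big_mkord.
have fE x : `|x - x0| < r -> f x = F (x - x0).
  by move=> /Ha; rewrite -pseriesE /F => /cvg_lim ->.
have [r2_gt0 r2_lt] : 0 < r / 2 /\ r / 2 < r by split; lra.
have [r4_gt0 r4_lt] : 0 < r / 4 /\ r / 4 < r / 2 by split; lra.
have ar2 : cvgn (pseries a (r / 2)).
  apply/cvg_ex; exists (f (r / 2 + x0)); rewrite pseriesE.
  by have := Ha (r / 2 + x0); rewrite addrK gtr0_norm //; apply.
have da_r4 : cvgn (pseries (pseries_diffs a) (r / 4)).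
  by apply: is_cvg_pseries_diffs_inside ar2 _; rewrite !gtr0_norm.
have near_r2 : \forall x \near x0, `|x - x0| < r / 2.
  by apply: filterS (nbhsx_ballx x0 _ r2_gt0) => x; rewrite /ball /= distrC.
have f_is_derive : \forall x \near x0, is_derive x (1 : R) f (F1 (x - x0)).
  apply: filterS near_r2 => x xr2.
  have Fx : is_derive (x - x0) (1 : R) F (F1 (x - x0)).
    by apply: is_derive_pseries ar2 _; rewrite (gtr0_norm r2_gt0).
  have := @is_derive1_comp _ F (fun t => t - x0) x _ _ Fx (is_derive_shift x 1 (- x0)).
  rewrite mulr1.
  apply: near_eq_is_derive; apply: filterS (nbhsx_ballx x _ r2_gt0) => y.
  rewrite /ball /= distrC => yx; rewrite fE //.
  by rewrite (le_lt_trans (ler_distD x _ _)) //; lra.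
split; first by apply: filterS f_is_derive => x [].
have F1_0 : is_derive (x0 - x0) (1 : R) F1 (limn (pseries (pseries_diffs (pseries_diffs a)) 0)).
  by rewrite subrr; apply: is_derive_pseries da_r4 _; rewrite normr0 gtr0_norm.
have [+ _] := @is_derive1_comp _ F1 (fun t => t - x0) x0 _ _ F1_0 (is_derive_shift x0 1 (- x0)).
apply: near_eq_derivable; apply: filterS f_is_derive => x [_ Dfx].
by rewrite /= derive1E Dfx.
Qed.

Lemma derive1_local_min f x0 :
  (\forall x \near x0, derivable f x 1 /\ f x0 <= f x) -> derive1 f x0 = 0.
Proof.
move=> /nbhs_ballP[e /= e_gt0 fe].
have ball_itv t : t \in `]x0 - e, x0 + e[%R -> ball x0 e t.
  by rewrite in_itv /= => ?; rewrite /ball /= ltr_distlC.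
have x0_itv : x0 \in `]x0 - e, x0 + e[%R.
  by rewrite in_itv /= ltrDl gtrBl e_gt0.
have min0 : is_derive x0 1 f 0.
  apply: (derive1_at_min _ _ x0_itv); first lra.
  - by move=> t /ball_itv /fe [].
  - by move=> t /ball_itv /fe [].
by rewrite derive1E; case: min0.
Qed.

Lemma analytic_at_affine (a b : R) : analytic_at (fun t => a + t * b) 0.
Proof.
pose c k := if k is 0%N then a else if k is 1%N then b else 0.
exists c, 1; split=> // x _; rewrite -(cvg_shiftn 2).
have -> : (fun N => \sum_(k < N + 2) c k * (x - 0) ^+ k) = cst (a + x * b).
  apply/funext => N; rewrite addn2 2!big_ord_recl big1 => [|k _]; last by rewrite mul0r.
  by rewrite /= subr0 expr0 mulr1 expr1 addr0 mulrC.
exact: cvg_cst.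
Qed.

End PowerSeries.

Section MixedDerivative.
Variable R : realType.

Lemma is_derive_quadratic (a b c x : R) :
  is_derive x 1 (fun s => a + s * b + s ^+ 2 * c) (b + 2 * x * c).
Proof.
pose P : {poly R} := a%:P + b *: 'X + c *: 'X^2.
have -> : (fun s => a + s * b + s ^+ 2 * c) = horner P.
  by apply/funext => s; rewrite !hornerD !hornerZ hornerC hornerX hornerXn; ring.
have -> : b + 2 * x * c = P^`().[x].
  rewrite !derivD !derivZ derivC derivX derivXn !hornerD !hornerZ hornerC.
  by rewrite hornerMn hornerC hornerXn /=; ring.
exact: is_derive_poly.
Qed.

Lemma is_derive_affine (a b x : R) : is_derive x 1 (fun s => a + s * b) b.
Proof.
have := is_derive_quadratic a b 0 x; rewrite mulr0 addr0.
by under eq_fun do rewrite mulr0 addr0.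
Qed.

Lemma is_derive_big (I : Type) (r : seq I) (P : pred I) (h : I -> R -> R)
    (dh : I -> R) (x : R) :
  (forall i, P i -> is_derive x 1 (h i) (dh i)) ->
  is_derive x 1 (fun y => \sum_(i <- r | P i) h i y) (\sum_(i <- r | P i) dh i).
Proof.
move=> hd; rewrite -fct_sumE.
by elim/big_rec2: _ => [|i F dF Pi dF_F]; [exact: is_derive_cst | exact/is_deriveD/hd].
Qed.

Definition is_mixed_derive (F : R -> R -> R) (h : R) : Prop :=
  exists2 g : R -> R,
    (\forall s \near (0 : R), is_derive (0 : R) 1 (F s) (g s)) & is_derive (0 : R) 1 g h.

Lemma mixed_deriveE F h :
  is_mixed_derive F h -> derive1 (fun s => derive1 (F s) 0) 0 = h.
Proof.
case=> g Fg gh.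
have Fg' : \forall s \near (0 : R), derive1 (F s) 0 = g s.
  by apply: filterS Fg => s [_ Fs]; rewrite derive1E.
by rewrite derive1E (near_eq_derive _ Fg'); case: gh.
Qed.

Lemma is_mixed_derive_sum (I : finType) (P : pred I) (F : I -> R -> R -> R)
    (h : I -> R) :
  (forall i, P i -> is_mixed_derive (F i) (h i)) ->
  is_mixed_derive (fun s t => \sum_(i | P i) F i s t) (\sum_(i | P i) h i).
Proof.
move=> Fh.
have /boolp.choice[g Hg] : forall i, exists g : R -> R, P i ->
    (\forall s \near (0 : R), is_derive (0 : R) 1 (F i s) (g s)) /\ is_derive (0 : R) 1 g (h i).
  move=> i; have [/Fh[g Fg gh]|_] := boolP (P i); first by exists g.
  by exists (fun=> 0).
have Fg_near i : \forall s \near (0 : R), P i -> is_derive (0 : R) 1 (F i s) (g i s).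
  have [/Hg[Fs _]|_] := boolP (P i); first by near=> s => _; near: s.
  by near=> s.
exists (fun s => \sum_(i | P i) g i s); last by apply: is_derive_big => i /Hg[].
near=> s; apply: is_derive_big; near: s.
exact: filter_forall _ Fg_near.
Unshelve. all: by end_near.
Qed.

End MixedDerivative.

(* [|a + s u + t v|^2] in terms of the Gram entries [A = |a|^2], [B = a.u],
   [C = a.v], [U = |u|^2], [X = u.v] and [V = |v|^2]. *)
Definition gram_quad (R : comRingType) (A B C U X V s t : R) : R :=
  A + 2 * s * B + 2 * t * C + s ^+ 2 * U + 2 * s * t * X + t ^+ 2 * V.

Section SqrtGramQuad.
Variables (R : realType) (E : R -> R) (A B C U X V : R).
Hypothesis A_gt0 : 0 < A.

Let q s := gram_quad A B C U X V s 0.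
Let g s := derive1 E (Num.sqrt (q s)) * ((C + s * X) / Num.sqrt (q s)).

Let q0 : q 0 = A. Proof. by rewrite /q /gram_quad; ring. Qed.

Let is_derive_q : is_derive (0 : R) 1 q (2 * B).
Proof.
have -> : q = fun s => A + s * (2 * B) + s ^+ 2 * U.
  by apply/funext => s; rewrite /q /gram_quad; ring.
by have := is_derive_quadratic A (2 * B) U 0; rewrite mulr0 mul0r addr0.
Qed.

Let sqrt_q_cvg : Num.sqrt (q s) @[s --> 0] --> Num.sqrt A.
Proof.
apply: continuous_cvg; first exact: sqrt_continuous.
rewrite -q0; apply/differentiable_continuous/derivable1_diffP.
by case: is_derive_q.
Qed.

Let is_derive_gram_quad_t s :
  is_derive (0 : R) 1 (gram_quad A B C U X V s) (2 * C + 2 * s * X).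
Proof.
have -> : gram_quad A B C U X V s = fun t => q s + t * (2 * C + 2 * s * X) + t ^+ 2 * V.
  by apply/funext => t; rewrite /q /gram_quad; ring.
by have := is_derive_quadratic (q s) (2 * C + 2 * s * X) V 0; rewrite mulr0 mul0r addr0.
Qed.

Lemma is_derive_sqrt_gram_quad_t :
  (\forall y \near Num.sqrt A, derivable E y 1) ->
  \forall s \near 0,
    is_derive (0 : R) 1 (fun t => E (Num.sqrt (gram_quad A B C U X V s t))) (g s).
Proof.
move=> E_derivable.
have sqrt_q_gt0 : \forall s \near 0, 0 < Num.sqrt (q s).
  by apply: (cvgr_gt _ sqrt_q_cvg); rewrite sqrtr_gt0.
have E_derivable_q : \forall s \near 0, derivable E (Num.sqrt (q s)) 1.
  exact: sqrt_q_cvg E_derivable.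
near=> s.
have qs_gt0 : 0 < q s by rewrite -sqrtr_gt0; near: s.
have sqrt_q : is_derive (q s) 1 Num.sqrt (2 * Num.sqrt (q s))^-1.
  exact: is_derive1_sqrt.
have E_q : is_derive (Num.sqrt (q s)) 1 E (derive1 E (Num.sqrt (q s))).
  by rewrite derive1E; apply: derivableP; near: s.
have sqrt_gram := @is_derive1_comp _ _ (gram_quad A B C U X V s) 0 _ _ sqrt_q
  (is_derive_gram_quad_t s).
have := @is_derive1_comp _ E (Num.sqrt \o gram_quad A B C U X V s) 0 _ _ E_q sqrt_gram.
suff -> : g s = derive1 E (Num.sqrt (q s)) *
    ((2 * Num.sqrt (q s))^-1 * (2 * C + 2 * s * X)) by [].
by rewrite /g; congr (_ * _); field; rewrite gt_eqF // sqrtr_gt0.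
Unshelve. all: by end_near.
Qed.

(* The product rule leaves a term [E'(sqrt A) * _], which vanishes. *)
Lemma is_derive_sqrt_gram_quad_s :
  derivable (derive1 E) (Num.sqrt A) 1 -> derive1 E (Num.sqrt A) = 0 ->
  is_derive (0 : R) 1 g (derive1 (derive1 E) (Num.sqrt A) * B * C / A).
Proof.
move=> E'_derivable E'_eq0; set E2 := derive1 (derive1 E) (Num.sqrt A).
have sqrt_q0 : is_derive (q 0) 1 Num.sqrt (2 * Num.sqrt (q 0))^-1.
  by apply: is_derive1_sqrt; rewrite q0.
have E'_q0 : is_derive (Num.sqrt (q 0)) 1 (derive1 E) E2.
  by rewrite q0 /E2 derive1E; apply: derivableP.
have sqrt_q := is_derive1_comp sqrt_q0 is_derive_q.
have E'_q := @is_derive1_comp _ (derive1 E) (Num.sqrt \o q) 0 _ _ E'_q0 sqrt_q.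
have inv_sqrt_q : derivable (fun s : R => (Num.sqrt (q s))^-1) 0 1.
  apply: derivableV; last by case: sqrt_q.
  by rewrite q0 gt_eqF // sqrtr_gt0.
have ratio : derivable (fun s : R => (C + s * X) * (Num.sqrt (q s))^-1) 0 1.
  by apply: derivableM => //; case: (is_derive_affine C X 0).
have := is_deriveM E'_q (derivableP ratio); set D := (derive _ _ _).
suff -> : E2 * B * C / A = derive1 E (Num.sqrt (q 0)) *: D +
    ((C + 0 * X) * (Num.sqrt (q 0))^-1) *:
    (E2 * ((2 * Num.sqrt (q 0))^-1 * (2 * B))) by [].
rewrite q0 E'_eq0 /GRing.scale /= mul0r add0r -[X in _ / X](sqr_sqrtr (ltW A_gt0)).
by field; rewrite gt_eqF // sqrtr_gt0.
Qed.

Lemma is_mixed_derive_sqrt_gram_quad :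
  (\forall y \near Num.sqrt A, derivable E y 1) ->
  derivable (derive1 E) (Num.sqrt A) 1 -> derive1 E (Num.sqrt A) = 0 ->
  is_mixed_derive (fun s t => E (Num.sqrt (gram_quad A B C U X V s t)))
    (derive1 (derive1 E) (Num.sqrt A) * B * C / A).
Proof.
move=> E_derivable E'_derivable E'_eq0; exists g.
  exact: is_derive_sqrt_gram_quad_t.
exact: is_derive_sqrt_gram_quad_s.
Qed.

End SqrtGramQuad.

Section Frameworks.
Variables (R : realType) (n d : nat).
Implicit Types (G : rel 'I_n) (p q r u v : 'M[R]_(n, d)) (Eij : 'I_n -> 'I_n -> R -> R).

Lemma dotv_sym q r i j : dotv q r i j = dotv q r j i.
Proof. by apply: eq_bigr => k _; ring. Qed.

Lemma sqdist_ge0 q i j : 0 <= sqdist q i j.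
Proof. by apply: sumr_ge0 => k _; rewrite -expr2 sqr_ge0. Qed.

Lemma sqdist_gram p u v i j s t :
  sqdist (p + s *: u + t *: v) i j =
  gram_quad (sqdist p i j) (dotv p u i j) (dotv p v i j)
    (sqdist u i j) (dotv u v i j) (sqdist v i j) s t.
Proof.
rewrite /gram_quad /sqdist /dotv !mulr_sumr -!big_split /=.
by apply: eq_bigr => k _; rewrite !mxE; ring.
Qed.

Lemma derive1_sqdist_line p (p' : 'M[R]_(n, d)) i j :
  derive1 (fun t => sqdist (p + t *: p') i j) 0 = 2 * dotv p p' i j.
Proof.
have -> : (fun t => sqdist (p + t *: p') i j) =
    fun t => sqdist p i j + t * (2 * dotv p p' i j) + t ^+ 2 * sqdist p' i j.
  apply/funext => t; rewrite /sqdist /dotv !mulr_sumr -!big_split /=.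
  by apply: eq_bigr => k _; rewrite !mxE; ring.
rewrite derive1E; case: (is_derive_quadratic (sqdist p i j) (2 * dotv p p' i j) (sqdist p' i j) 0).
by move=> _ ->; rewrite mulr0 mul0r addr0.
Qed.

Lemma stiff_bar_edge G p Eij i j : stiff_bar G p Eij -> G i j ->
  [/\ 0 < sqdist p i j,
      \forall y \near dist p i j, derivable (Eij i j) y 1,
      derivable (derive1 (Eij i j)) (dist p i j) 1
    & derive1 (Eij i j) (dist p i j) = 0].
Proof.
move=> stiff Gij; have [d_neq0 E_an E_min _] := stiff i j Gij.
have [E_der E'_der] := analytic_at_derivable2 E_an.
split=> //.
  rewrite lt_def sqdist_ge0 andbT; apply: contra d_neq0 => /eqP.
  by rewrite /dist => ->; rewrite sqrtr0.
apply: derive1_local_min; apply: filterS2 E_der E_min => y E_y E_lt; split=> //.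
by have [->|/E_lt/ltW] := eqVneq y (dist p i j).
Qed.

Lemma hessian_energy G p Eij u v : stiff_bar G p Eij ->
  hessian (energy G Eij) p u v =
  \sum_(i < n) \sum_(j < n | (i < j)%N && G i j)
     (derive1n 2 (Eij i j) (dist p i j) * dotv p u i j * dotv p v i j
        / sqdist p i j).
Proof.
move=> stiff; rewrite /hessian /energy pair_big_dep.
under eq_fun => s do under eq_fun => t do
  (rewrite pair_big_dep; under eq_bigr => ij _ do rewrite /dist sqdist_gram).
apply/mixed_deriveE/is_mixed_derive_sum => -[i j] /and3P[_ _ Gij] /=.
have [A_gt0 E_der E'_der E'_eq0] := stiff_bar_edge stiff Gij.
exact: is_mixed_derive_sqrt_gram_quad.
Qed.

Lemma simple_graph_edge_dotv G p q : simple_graph G ->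
  (forall i j : 'I_n, (i < j)%N -> G i j -> dotv p q i j = 0) ->
  forall i j, G i j -> dotv p q i j = 0.
Proof.
move=> [G_sym G_irr] dpq i j Gij; case: (ltngtP i j) => [ij|ji|/val_inj ij].
- exact: dpq.
- by rewrite dotv_sym; apply: dpq; rewrite // G_sym.
- by move: Gij; rewrite ij (negbTE (G_irr j)).
Qed.

Lemma hessian_energy_eq0 G p Eij q : simple_graph G -> stiff_bar G p Eij ->
  hessian (energy G Eij) p q q = 0 -> forall i j, G i j -> dotv p q i j = 0.
Proof.
move=> G_simple stiff; rewrite hessian_energy // => sum_eq0.
apply: (simple_graph_edge_dotv G_simple) => i j ij Gij.
have term_ge0 (i' j' : 'I_n) : (i' < j')%N && G i' j' ->
    0 <= derive1n 2 (Eij i' j') (dist p i' j') * dotv p q i' j' * dotv p q i' j'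
           / sqdist p i' j'.
  case/andP=> _ /stiff[_ _ _ E2_gt0].
  apply: mulr_ge0; last by rewrite invr_ge0 sqdist_ge0.
  by rewrite -mulrA; apply: mulr_ge0; [exact: ltW | rewrite -expr2 sqr_ge0].
have row_eq0 := psumr_eq0P (fun i' _ => sumr_ge0 _ (term_ge0 i')) sum_eq0.
have ijG : (i < j)%N && G i j by rewrite ij Gij.
have /eqP := psumr_eq0P (term_ge0 i) (row_eq0 i isT) ijG.
have [sq_gt0 _ _ _] := stiff_bar_edge stiff Gij; have [_ _ _ E2_gt0] := stiff i j Gij.
by rewrite !mulf_eq0 invr_eq0 (gt_eqF E2_gt0) (gt_eqF sq_gt0) /= orbF orbb => /eqP.
Qed.

Lemma hess_kernel_Kspace l G p Eij p' : simple_graph G -> stiff_bar G p Eij ->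
  hess_kernel l (energy G Eij) p p' <-> Kspace l G p p'.
Proof.
move=> G_simple stiff; split=> -[p'_pinned p'_ker]; split=> //.
  exact/(hessian_energy_eq0 G_simple stiff)/p'_ker.
move=> v _; rewrite hessian_energy //.
by apply: big1 => i _; apply: big1 => j /andP[_ Gij]; rewrite p'_ker // mulr0 !mul0r.
Qed.

Lemma line_11_flexP l G p p' : pinned_pos l p -> pinned_pos l p' -> p' != 0 ->
  is_11_flex l G p (fun t => p + t *: p') <-> forall i j, G i j -> dotv p p' i j = 0.
Proof.
move=> p_pinned p'_pinned p'_neq0.
have entryE i k : (fun t => (p + t *: p') i k) = (fun t => p i k + t * p' i k).
  by apply/funext => t; rewrite !mxE.
split=> [[_ [_ _ _ _ flex]] v w Gvw|Kp'].
  by have /eqP := flex v w Gvw; rewrite derive1_sqdist_line mulf_eq0 pnatr_eq0 /= => /eqP.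
split=> [i k|]; first by rewrite entryE; exact: analytic_at_affine.
have [i [k p'ik]] : exists i k, p' i k != 0.
  apply/not_existsP => p'_eq0; move/eqP: p'_neq0; apply; apply/matrixP => i k.
  by rewrite mxE; apply/eqP/negPn/negP => ?; apply: (p'_eq0 i); exists k.
split.
- by move=> t i' k' ? ?; rewrite !mxE p_pinned // p'_pinned // mulr0 addr0.
- by rewrite scale0r addr0.
- exists 1; rewrite scale1r scale0r addr0; apply: contra p'_neq0 => /eqP.
  by rewrite -{2}[p]addr0 => /addrI ->.
- exists i, k; rewrite entryE derive1E.
  by case: (is_derive_affine (p i k) (p' i k) 0) => _ ->.
- by move=> v w Gvw; rewrite derive1_sqdist_line Kp' // mulr0.
Qed.

End Frameworks.

Unset Implicit Arguments.
Close Scope classical_set_scope.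

Theorem lemma7p1 (R : realType) (n d l : nat) (G : rel 'I_n)
  (p : 'M[R]_(n, d)) (Eij : 'I_n -> 'I_n -> R -> R) :
  simple_graph G -> pinned l p -> stiff_bar G p Eij ->
  forall p' : 'M[R]_(n, d), pinned_pos l p' ->
    (hess_kernel l (energy G Eij) p p' <->
       (is_11_flex l G p (fun t : R => p + t *: p') \/ p' = 0))
    /\ (hess_kernel l (energy G Eij) p p' <-> Kspace l G p p').
Proof.
move=> G_simple [_ _ p_pinned] stiff p' p'_pinned.
have kerK := hess_kernel_Kspace l p' G_simple stiff.
split=> //; rewrite kerK.
have [->|p'_neq0] := eqVneq p' 0.
  split=> [_|_]; first by right.
  split=> [i k _ _|v w _]; first by rewrite mxE.
  by apply: big1 => k _; rewrite !mxE subrr mulr0.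
rewrite /Kspace line_11_flexP //.
split=> [[_ Kp']|[Kp'|/eqP]]; [by left | by [] | by rewrite (negbTE p'_neq0)].
Qed.
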